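(* Let $n\ge1$, $F_1,\dots,F_n:\mathbb{R}^d\to\mathbb{R}^d$, $F=\frac1n\sum_iF_i$, with $F$ $\mu$-strongly monotone ($\mu>0$) and each $F_i$ $L_i$-Lipschitz; let $z_*$ be the solution of $F(z_* )=0$, $L_{max}=\max_iL_i$, $\sigma_*^2=\frac1n\sum_i\|F_i(z_* )\|^2$. Consider the iterates $z_0^k$ of SEG-SO (defined in the context) started at $z_0$. 1. If $\gamma_2=2\gamma_1$ and $\gamma_1\le\frac{\mu}{10L_{max}^2\sqrt{10n^2+2n+54}}$, then $$\mathbb{E}\|z_0^k-z_*\|^2\le\Big(1-\frac{\gamma_1n\mu}{4}\Big)^k\|z_0-z_*\|^2+\frac{96L_{max}^2}{\mu^2}\big[(25+n)\gamma_1^2+\gamma_2^2\big]\sigma_*^2.$$ 2. If SEG-SO is run for $K$ epochs with $\gamma_2=2\gamma_1$ and $\gamma_1=\min\Big\{\frac{\mu}{10L_{max}^2\sqrt{10n^2+2n+54}},\frac{4\log(n^{1/2}K)}{\mu nK}\Big\}$, then $$\mathbb{E}\|z_0^K-z_*\|^2=\tilde{\mathcal{O}}\Big(e^{-\frac{\mu^2K}{L_{max}^2}}+\frac1{nK^2}\Big).$$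
   Context: $\mu$-strongly monotone: $\langle F(z_1)-F(z_2),z_1-z_2\rangle\ge\mu\|z_1-z_2\|^2$. SEG-SO (shuffle once) with step sizes $\gamma_1,\gamma_2>0$: draw one permutation $\pi$ of $\{1,\dots,n\}$ uniformly at random at the start; set $z_0^0=z_0$; for each epoch $k=0,1,\dots$ and $i=0,\dots,n-1$ set $\bar z_i^k=z_i^k-\gamma_2F_{\pi_i}(z_i^k)$, $z_{i+1}^k=z_i^k-\gamma_1F_{\pi_i}(\bar z_i^k)$; then $z_0^{k+1}=z_n^k$. $\mathbb{E}$ is expectation over $\pi$. $\tilde{\mathcal{O}}$ suppresses constant and logarithmic factors. *)

From HB Require Import structures.
From mathcomp Require Import all_boot all_order all_fingroup all_algebra.
From mathcomp Require Import reals sequences exp.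
Set Implicit Arguments. Unset Strict Implicit. Unset Printing Implicit Defensive.
Import Order.TTheory GRing.Theory Num.Theory.
Local Open Scope ring_scope.

Section SEG.
Variables (R : realType) (n d : nat).
Notation V := 'rV[R]_d.

Definition dotv (u v : V) : R := \sum_(j < d) u 0 j * v 0 j.
Definition sqnorm (v : V) : R := dotv v v.
Definition enorm (v : V) : R := Num.sqrt (sqnorm v).

Definition Favg (F : 'I_n -> V -> V) (z : V) : V :=
  n%:R^-1 *: \sum_(i < n) F i z.

Definition strongly_monotone (G : V -> V) (mu : R) : Prop :=
  forall z1 z2 : V, mu * sqnorm (z1 - z2) <= dotv (G z1 - G z2) (z1 - z2).

Definition lipschitz (G : V -> V) (L : R) : Prop :=
  forall z1 z2 : V, enorm (G z1 - G z2) <= L * enorm (z1 - z2).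

Definition Lmax (L : 'I_n -> R) : R := \big[Num.max/0]_(i < n) L i.

Definition sigma2 (F : 'I_n -> V -> V) (zs : V) : R :=
  n%:R^-1 * \sum_(i < n) sqnorm (F i zs).

Definition seg_setting (F : 'I_n -> V -> V) (L : 'I_n -> R) (mu : R) (zs : V)
  : Prop :=
  [/\ (0 < n)%N, 0 < mu, strongly_monotone (Favg F) mu,
      (forall i, lipschitz (F i) (L i)) & Favg F zs = 0].

Definition seg_step (F : 'I_n -> V -> V) (g1 g2 : R) (j : 'I_n) (z : V) : V :=
  let zb := z - g2 *: F j z in z - g1 *: F j zb.

Definition seg_epoch (F : 'I_n -> V -> V) (g1 g2 : R) (pi : 'S_n) (z : V) : V :=
  foldl (fun z i => seg_step F g1 g2 (pi i) z) z (enum 'I_n).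

(* z_0^k for SEG-SO: the permutation pi is drawn once and reused *)
Definition segso_iter (F : 'I_n -> V -> V) (g1 g2 : R) (pi : 'S_n) (z0 : V)
  (k : nat) : V := iter k (seg_epoch F g1 g2 pi) z0.

(* expectation over a uniformly random permutation pi of 'I_n *)
Definition Eperm (X : 'S_n -> R) : R :=
  (\sum_(pi : 'S_n) X pi) / #|{perm 'I_n}|%:R.

End SEG.

From mathcomp Require Import all_boot all_order all_fingroup all_algebra.
From mathcomp Require Import reals sequences exp.
From mathcomp Require Import ring lra zify.
Import Order.TTheory GRing.Theory Num.Theory.
Local Open Scope ring_scope.
Set Implicit Arguments. Unset Strict Implicit. Unset Printing Implicit Defensive.

(* Over one epoch, SEG with [gamma_2 = 2 gamma_1] moves [z_0] to
   [z_0 - gamma_1 n F(z_0)] (a deterministic step, contracting [|z_0 - z*|^2] by about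
   [1 - 2 gamma_1 n mu] by strong monotonicity and Lipschitz continuity) plus an error controlled by
   the distances [|\bar z_j - z_0|^2] of the extrapolation points from the start of the epoch.
   These distances are bounded in terms of [|z_0 - z*|^2] and the prefix sums
   [sum_(l < j) F_(pi l)(z* )], which yields the one-epoch recursion
   [|z_0^(k+1) - z*|^2 <= (1 - gamma_1 n mu / 2) |z_0^k - z*|^2 + N(pi)].  It is unrolled for the
   fixed [pi] (the permutation is drawn only once) and averaged over [pi] only at the end: the
   prefix sums are sums without replacement from a centred population, so their mean square is at
   most [j sigma_*^2].  Part 2 is Part 1 with the contraction factor bounded by
   [exp(- gamma_1 n mu / 2)] and the tuned step size: when the first term of the minimum is active
   the exponential is small, otherwise [rho^K = 1 / (n K^2)]. *)

Lemma sum_const_ord (R : pzSemiRingType) (m : nat) (c : R) : \sum_(i < m) c = m%:R * c.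
Proof. by rewrite sumr_const card_ord mulr_natl. Qed.

Lemma sum_ord_prefix_le (R : numDomainType) (f : nat -> R) (j m : nat) :
  (j <= m)%N -> (forall l, 0 <= f l) -> \sum_(l < j) f l <= \sum_(l < m) f l.
Proof.
move=> jm f_ge0; rewrite -!(big_mkord xpredT) (big_cat_nat (leq0n j) jm) /=.
by rewrite lerDl sumr_ge0.
Qed.

Section InnerProduct.
Variables (R : realType) (d : nat).
Implicit Types (u v w : 'rV[R]_d) (e k : R).

Lemma dotvC u v : dotv u v = dotv v u.
Proof. by apply: eq_bigr => j _; rewrite mulrC. Qed.

Lemma dotvDl u v w : dotv (u + v) w = dotv u w + dotv v w.
Proof. by rewrite /dotv -big_split; apply: eq_bigr => j _; rewrite mxE mulrDl. Qed.

Lemma dotvZl k u w : dotv (k *: u) w = k * dotv u w.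
Proof. by rewrite /dotv mulr_sumr; apply: eq_bigr => j _; rewrite mxE mulrA. Qed.

Lemma dotvNl u w : dotv (- u) w = - dotv u w.
Proof. by rewrite -scaleN1r dotvZl mulN1r. Qed.

Lemma dotvDr u v w : dotv w (u + v) = dotv w u + dotv w v.
Proof. by rewrite dotvC dotvDl !(dotvC w). Qed.

Lemma dotvZr k u w : dotv w (k *: u) = k * dotv w u.
Proof. by rewrite dotvC dotvZl dotvC. Qed.

Lemma dotvNr u w : dotv w (- u) = - dotv w u.
Proof. by rewrite dotvC dotvNl dotvC. Qed.

Lemma dotv0l w : dotv 0 w = 0.
Proof. by rewrite -(scale0r 0) dotvZl mul0r. Qed.

Lemma dotv_suml (I : Type) (s : seq I) (P : pred I) (f : I -> 'rV[R]_d) w :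
  dotv (\sum_(i <- s | P i) f i) w = \sum_(i <- s | P i) dotv (f i) w.
Proof.
elim: s => [|a s IH]; first by rewrite !big_nil dotv0l.
by rewrite !big_cons; case: (P a); rewrite ?dotvDl IH.
Qed.

Lemma dotv_sumr (I : Type) (s : seq I) (P : pred I) (f : I -> 'rV[R]_d) w :
  dotv w (\sum_(i <- s | P i) f i) = \sum_(i <- s | P i) dotv w (f i).
Proof. by rewrite dotvC dotv_suml; apply: eq_bigr => i _; rewrite dotvC. Qed.

Lemma sqnorm_ge0 v : 0 <= sqnorm v.
Proof. by apply: sumr_ge0 => j _; rewrite -expr2 sqr_ge0. Qed.

Lemma sqnorm_dim0 v : d = 0%N -> sqnorm v = 0.
Proof. by move=> d0; rewrite /sqnorm /dotv big1 // => j _; have := ltn_ord j; rewrite {2}d0. Qed.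

Lemma sqnormD u v : sqnorm (u + v) = sqnorm u + 2 * dotv u v + sqnorm v.
Proof. by rewrite /sqnorm !dotvDl !dotvDr (dotvC v u); ring. Qed.

Lemma sqnormN v : sqnorm (- v) = sqnorm v.
Proof. by rewrite /sqnorm dotvNl dotvNr opprK. Qed.

Lemma sqnormZ k v : sqnorm (k *: v) = k ^+ 2 * sqnorm v.
Proof. by rewrite /sqnorm dotvZl dotvZr mulrA expr2. Qed.

Lemma sqnormB u v : sqnorm (u - v) = sqnorm u - 2 * dotv u v + sqnorm v.
Proof. by rewrite sqnormD sqnormN dotvNr; ring. Qed.

Lemma sqnorm_sum_dotv (I : Type) (s : seq I) (f : I -> 'rV[R]_d) :
  sqnorm (\sum_(i <- s) f i) = \sum_(i <- s) \sum_(j <- s) dotv (f i) (f j).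
Proof. by rewrite /sqnorm dotv_suml; apply: eq_bigr => i _; exact: dotv_sumr. Qed.

Lemma dotv_le_young e u v : 0 < e -> 2 * e * dotv u v <= e ^+ 2 * sqnorm u + sqnorm v.
Proof. by move=> e0; have := sqnorm_ge0 (e *: u - v); rewrite sqnormB sqnormZ dotvZl; lra. Qed.

Lemma dotv_le_sqnorm u v : 2 * dotv u v <= sqnorm u + sqnorm v.
Proof. by have := dotv_le_young u v ltr01; rewrite expr1n !mulr1 mul1r. Qed.

Lemma sqnormD_le u v : sqnorm (u + v) <= 2 * sqnorm u + 2 * sqnorm v.
Proof. by rewrite sqnormD; have := dotv_le_sqnorm u v; lra. Qed.

Lemma sqnormD3_le u v w :
  sqnorm (u + v + w) <= 3 * sqnorm u + 3 * sqnorm v + 3 * sqnorm w.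
Proof.
rewrite !sqnormD dotvDl.
by have := dotv_le_sqnorm u v; have := dotv_le_sqnorm u w; have := dotv_le_sqnorm v w; lra.
Qed.

Lemma sqnormD_le_weighted e u v : 0 < e ->
  e * sqnorm (u + v) <= e * (1 + e) * sqnorm u + (1 + e) * sqnorm v.
Proof.
move=> e0; rewrite sqnormD; have := dotv_le_young u v e0.
by have := sqnorm_ge0 u; have := sqnorm_ge0 v; nra.
Qed.

Lemma sqnormB_le_mid u v w : sqnorm (u - w) <= 2 * sqnorm (u - v) + 2 * sqnorm (v - w).
Proof. by rewrite -(subrKA v); apply: sqnormD_le. Qed.

Lemma sqnorm_sum_le (m : nat) (f : 'I_m -> 'rV[R]_d) :
  sqnorm (\sum_(i < m) f i) <= m%:R * \sum_(i < m) sqnorm (f i).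
Proof.
rewrite sqnorm_sum_dotv.
have le_mean i j : dotv (f i) (f j) <= (sqnorm (f i) + sqnorm (f j)) / 2.
  by have := dotv_le_sqnorm (f i) (f j); lra.
apply: le_trans (ler_sum _ (fun i _ => ler_sum _ (fun j _ => le_mean i j))) _.
under eq_bigr do rewrite -big_distrl big_split /= sum_const_ord.
rewrite -big_distrl big_split /= -mulr_sumr sum_const_ord; lra.
Qed.

End InnerProduct.

Lemma sum_perm_comp (T : finType) (M : nmodType) (p : {perm T}) (f : T -> M) :
  \sum_i f (p i) = \sum_i f i.
Proof. by rewrite [RHS](reindex_inj (@perm_inj _ p)). Qed.

Lemma sum_perm_mull (T : finType) (M : nmodType) (q : {perm T}) (X : {perm T} -> M) :
  \sum_p X p = \sum_p X (q * p)%g.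
Proof. exact: (reindex_inj (mulgI q)). Qed.

Lemma sum_perm_at (T : finType) (M : nmodType) (f : T -> M) (i k : T) :
  \sum_(p : {perm T}) f (p i) = \sum_(p : {perm T}) f (p k).
Proof.
by rewrite [LHS](sum_perm_mull (tperm i k)); apply: eq_bigr => p _; rewrite permM tpermL.
Qed.

Lemma sum_perm_at2 (T : finType) (M : nmodType) (h : T -> T -> M) (i i' k k' : T) :
  i != i' -> k != k' ->
  \sum_(p : {perm T}) h (p k) (p k') = \sum_(p : {perm T}) h (p i) (p i').
Proof.
move=> ii' kk'; set l := tperm i k i'.
have lk : l != k by rewrite /l -{2}(tpermL i k) (inj_eq perm_inj) eq_sym.
have k'k : k' != k by rewrite eq_sym.
rewrite [RHS](sum_perm_mull (tperm i k * tperm l k')%g); apply: eq_bigr => p _.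
by rewrite !permM tpermL (tpermD lk k'k) tpermL.
Qed.

Section PermutationMean.
Variables (R : realType) (n : nat).
Implicit Types X Y : 'S_n -> R.

Lemma card_perm_gt0 : (0 < #|{perm 'I_n}|)%N.
Proof. by apply/card_gt0P; exists 1%g. Qed.

Lemma eq_Eperm X Y : (forall p, X p = Y p) -> Eperm X = Eperm Y.
Proof. by move=> XY; rewrite /Eperm (eq_bigr _ (fun p _ => XY p)). Qed.

Lemma Eperm_le X Y : (forall p, X p <= Y p) -> Eperm X <= Eperm Y.
Proof. by move=> XY; rewrite /Eperm ler_pM2r ?invr_gt0 ?ltr0n ?card_perm_gt0 // ler_sum. Qed.

Lemma Eperm_const (c : R) : Eperm (fun _ : 'S_n => c) = c.
Proof. by rewrite /Eperm sumr_const -[c *+ _]mulr_natr mulfK // pnatr_eq0 -lt0n card_perm_gt0. Qed.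

Lemma EpermD X Y : Eperm (fun p => X p + Y p) = Eperm X + Eperm Y.
Proof. by rewrite /Eperm big_split mulrDl. Qed.

Lemma EpermZ (c : R) X : Eperm (fun p => c * X p) = c * Eperm X.
Proof. by rewrite /Eperm -mulr_sumr mulrA. Qed.

Lemma Eperm_sum (I : Type) (s : seq I) (X : I -> 'S_n -> R) :
  Eperm (fun p => \sum_(i <- s) X i p) = \sum_(i <- s) Eperm (X i).
Proof. by rewrite /Eperm exchange_big mulr_suml. Qed.

Lemma Eperm_at (f : 'I_n -> R) (i : 'I_n) :
  Eperm (fun p => f (p i)) = n%:R^-1 * \sum_k f k.
Proof.
have n_gt0 : n%:R != 0 :> R by rewrite pnatr_eq0 -lt0n (leq_ltn_trans (leq0n i)).
have nE : n%:R * \sum_(p : 'S_n) f (p i) = #|{perm 'I_n}|%:R * \sum_k f k.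
  rewrite -sum_const_ord (eq_bigr (fun k => \sum_(p : 'S_n) f (p k))) => [|k _];
    last exact: sum_perm_at.
  by rewrite exchange_big /= (eq_bigr _ (fun p _ => sum_perm_comp p f)) sumr_const mulr_natl.
rewrite /Eperm; apply: (mulfI n_gt0); rewrite !mulrA nE mulfV // mul1r mulrAC mulfV ?mul1r //.
by rewrite pnatr_eq0 -lt0n card_perm_gt0.
Qed.

(* For a centred family [sum_(k != k') <a_k, a_k'> = - sum_k |a_k|^2 <= 0], and averaging over
   [pi] every off-diagonal pair [(pi i, pi i')] contributes equally. *)
Lemma Eperm_dotv_offdiag_le0 (d : nat) (a : 'I_n -> 'rV[R]_d) (i i' : 'I_n) :
  \sum_k a k = 0 -> i != i' -> Eperm (fun p => dotv (a (p i)) (a (p i'))) <= 0.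
Proof.
move=> a0 ii'; set T := \sum_(p : 'S_n) dotv (a (p i)) (a (p i')).
have sumE : \sum_k \sum_(k' | k' != k) \sum_(p : 'S_n) dotv (a (p k)) (a (p k'))
            = (n * n.-1)%:R * T.
  transitivity (\sum_(k : 'I_n) \sum_(k' | k' != k) T).
    apply: eq_bigr => k _; apply: eq_bigr => k' k'k.
    by apply: (sum_perm_at2 (fun x y => dotv (a x) (a y)) ii'); rewrite eq_sym.
  under eq_bigr do rewrite sumr_const cardC1 card_ord.
  by rewrite sumr_const card_ord -mulrnA mulr_natl mulnC.
have sum_le0 : \sum_k \sum_(k' | k' != k) \sum_(p : 'S_n) dotv (a (p k)) (a (p k')) <= 0.
  under eq_bigr do rewrite exchange_big /=.
  rewrite exchange_big /=; apply: sumr_le0 => p _.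
  have rowE k : \sum_(k' | k' != k) dotv (a (p k)) (a (p k'))
                = dotv (a (p k)) (\sum_k' a (p k')) - sqnorm (a (p k)).
    by rewrite dotv_sumr [in RHS](bigD1 k) //= /sqnorm addrAC subrr add0r.
  rewrite (eq_bigr _ (fun k _ => rowE k)) sum_perm_comp a0.
  by apply: sumr_le0 => k _; rewrite dotvC dotv0l sub0r oppr_le0 sqnorm_ge0.
have n2 : (0 < n * n.-1)%N.
  move: ii' (ltn_ord i) (ltn_ord i'); rewrite -val_eqE /=; lia.
rewrite /Eperm -/T pmulr_lle0 ?invr_gt0 ?ltr0n ?card_perm_gt0 //.
by move: sum_le0; rewrite sumE pmulr_rle0 // ltr0n.
Qed.

(* Sampling without replacement from a centred population. *)
Lemma Eperm_sqnorm_sum_inj (d : nat) (a : 'I_n -> 'rV[R]_d) (J : finType) (h : J -> 'I_n) :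
  \sum_k a k = 0 -> injective h ->
  Eperm (fun p => sqnorm (\sum_l a (p (h l)))) <= #|J|%:R * (n%:R^-1 * \sum_k sqnorm (a k)).
Proof.
move=> a0 h_inj.
rewrite (eq_Eperm (fun p => sqnorm_sum_dotv _ _)) Eperm_sum mulr_natl -sumr_const.
apply: ler_sum => l _; rewrite Eperm_sum (bigD1 l) //=.
rewrite -(Eperm_at (fun k => sqnorm (a k)) (h l)) -[X in _ <= X]addr0 lerD2l.
apply: sumr_le0 => m ml; apply: Eperm_dotv_offdiag_le0 => //.
by rewrite (inj_eq h_inj) eq_sym.
Qed.

End PermutationMean.

(* Arithmetic core of [sqnorm_epoch_le]: [x = g n mu], [s = (g n L)^2], [sq = |z_n - z*|^2],
   [sA = |z_0 - z* - g n F(z_0)|^2] and [sB = g^2 |sum_j (G_j(\bar z_j) - G_j(z_0))|^2]. *)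
Lemma perturbed_contraction_le (R : realFieldType) (x s r2 cW sA sB sq : R) :
  0 < x -> x <= 1 / 30 -> 0 <= s -> s <= x / 30 -> 0 <= r2 -> 0 <= cW ->
  x * sq <= x * (1 + x) * sA + (1 + x) * sB ->
  sA <= (1 - 2 * x + s) * r2 -> sB <= cW + 80 * s ^+ 2 * r2 ->
  x * sq <= x * ((1 - x / 2) * r2) + 2 * cW.
Proof.
move=> x_gt0 x_le s_ge0 s_le r2_ge0 cW_ge0 weighted sA_le sB_le.
have x1_ge0 : 0 <= 1 + x by lra.
have := ler_wpM2l (mulr_ge0 (ltW x_gt0) x1_ge0) sA_le; have := ler_wpM2l x1_ge0 sB_le.
have xr_ge0 : 0 <= x * r2 by rewrite mulr_ge0 // ltW.
have xxr_ge0 : 0 <= x * x * r2 by rewrite -mulrA mulr_ge0 // ltW.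
have xxxr_ge0 : 0 <= x * (x * x * r2) by rewrite mulr_ge0 // ltW.
have sr_ge0 : 0 <= s * r2 by rewrite mulr_ge0.
have ssr_ge0 : 0 <= s * s * r2 by rewrite -mulrA mulr_ge0.
have : x * cW <= 1 / 30 * cW by rewrite ler_wpM2r.
have : s * (x * r2) <= x / 30 * (x * r2) by rewrite ler_wpM2r.
have : s * (x * x * r2) <= x / 30 * (x * x * r2) by rewrite ler_wpM2r // mulr_ge0 // ltW.
have : s * (s * r2) <= x / 30 * (s * r2) by rewrite ler_wpM2r.
have : x * (s * s * r2) <= 1 / 30 * (s * s * r2) by rewrite ler_wpM2r.
lra.
Qed.

Section Epoch.
Variables (R : realType) (d : nat).
Notation V := 'rV[R]_d.

(* One epoch of SEG with [gamma_1 = g] and [gamma_2 = 2 g] along an arbitrary sequence of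
   operators [G 0, G 1, ...]: [epoch_iter G g z0 j] is [z_j] and [epoch_bar G g z0 j] is
   [\bar z_j]. *)
Fixpoint epoch_iter (G : nat -> V -> V) (g : R) (z0 : V) (j : nat) : V :=
  if j is j'.+1 then
    let z := epoch_iter G g z0 j' in z - g *: G j' (z - (2 * g) *: G j' z)
  else z0.

Definition epoch_bar (G : nat -> V -> V) (g : R) (z0 : V) (j : nat) : V :=
  epoch_iter G g z0 j - (2 * g) *: G j (epoch_iter G g z0 j).

Lemma epoch_iter_sub (G : nat -> V -> V) (g : R) (z0 : V) (j : nat) :
  epoch_iter G g z0 j - z0 = - (g *: \sum_(l < j) G l (epoch_bar G g z0 l)).
Proof.
elim: j => [|j IH]; first by rewrite big_ord0 scaler0 oppr0 subrr.
by rewrite big_ord_recr /= scalerDr opprD -IH /epoch_bar addrAC.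
Qed.

Variables (G : nat -> V -> V) (Fm : V -> V) (n : nat) (g mu L : R) (z0 zs : V).
Hypotheses (n_gt0 : (0 < n)%N) (g_gt0 : 0 < g) (mu_gt0 : 0 < mu) (mu_le_L : mu <= L).
Hypothesis step_small : 30 * g * n%:R * L ^+ 2 <= mu.
Hypothesis G_lip : forall j x y, sqnorm (G j x - G j y) <= L ^+ 2 * sqnorm (x - y).
Hypothesis G_mean : forall z, \sum_(j < n) G j z = n%:R *: Fm z.
Hypothesis Fm_mono : forall a b, mu * sqnorm (a - b) <= dotv (Fm a - Fm b) (a - b).
Hypothesis Fm_lip : forall a b, sqnorm (Fm a - Fm b) <= L ^+ 2 * sqnorm (a - b).
Hypothesis Fm_zs : Fm zs = 0.

Local Notation z := (epoch_iter G g z0).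
Local Notation zb := (epoch_bar G g z0).
Local Notation r2 := (sqnorm (z0 - zs)).
Local Notation drift := (\sum_(j < n) sqnorm (zb j - z0)).

Lemma sqnorm_epoch_iter_sub_le j : (j <= n)%N ->
  sqnorm (z j - z0) <= 2 * g ^+ 2 * sqnorm (\sum_(l < j) G l zs)
                       + 4 * g ^+ 2 * n%:R * L ^+ 2 * (drift + n%:R * r2).
Proof.
move=> jn; set D := \sum_(l < j) (G l (zb l) - G l zs).
have zE : z j - z0 = - (g *: (\sum_(l < j) G l zs + D)).
  rewrite epoch_iter_sub /D -big_split; congr (- (_ *: _)).
  by apply: eq_bigr => l _; rewrite [RHS]addrC subrK.
have D_le : sqnorm D <= n%:R * (2 * L ^+ 2 * (drift + n%:R * r2)).
  have terms_le : \sum_(l < j) sqnorm (G l (zb l) - G l zs)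
                  <= 2 * L ^+ 2 * (\sum_(l < j) sqnorm (zb l - z0) + j%:R * r2).
    rewrite -[j%:R * _]sum_const_ord -big_split mulr_sumr /=; apply: ler_sum => l _.
    apply: le_trans (G_lip _ _ _) _.
    by have := sqnormB_le_mid (zb l) z0 zs; have := sqr_ge0 L; nra.
  have drift_j : \sum_(l < j) sqnorm (zb l - z0) <= drift.
    exact: (sum_ord_prefix_le (f := fun l => sqnorm (zb l - z0)) jn (fun=> sqnorm_ge0 _)).
  have jr : j%:R * r2 <= n%:R * r2 by rewrite ler_wpM2r ?sqnorm_ge0 ?ler_nat.
  apply: le_trans (sqnorm_sum_le _) _; apply: ler_pM; rewrite ?ler_nat //.
    by apply: sumr_ge0 => l _; apply: sqnorm_ge0.
  by apply: le_trans terms_le _; have := sqr_ge0 L; nra.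
rewrite zE sqnormN sqnormZ.
apply: le_trans (ler_wpM2l (sqr_ge0 g) (sqnormD_le _ _)) _.
by have := sqr_ge0 g; nra.
Qed.

Lemma sqnorm_epoch_bar_sub_le j :
  sqnorm (zb j - z0) <= (3 + 24 * (g ^+ 2 * L ^+ 2)) * sqnorm (z j - z0)
                        + 12 * g ^+ 2 * sqnorm (G j zs) + 24 * (g ^+ 2 * L ^+ 2) * r2.
Proof.
have zbE : zb j - z0 = (z j - z0) + (- (2 * g)) *: G j zs
                       + (- (2 * g)) *: (G j (z j) - G j zs).
  by rewrite -(addrA (z j - z0)) -scalerDr [G j zs + _]addrC subrK scaleNr /epoch_bar addrAC.
have G_le := le_trans (G_lip j (z j) zs) (ler_wpM2l (sqr_ge0 L) (sqnormB_le_mid (z j) z0 zs)).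
rewrite zbE; apply: le_trans (sqnormD3_le _ _ _) _.
rewrite !sqnormZ sqrrN exprMn.
by have := sqr_ge0 g; have := sqnorm_ge0 (G j zs); nra.
Qed.

Lemma step_sq_le : g ^+ 2 * n%:R ^+ 2 * L ^+ 2 <= g * n%:R * mu / 30.
Proof.
have gn_ge0 : 0 <= g * n%:R by rewrite mulr_ge0 ?ler0n // ltW.
by have := ler_wpM2l gn_ge0 step_small; lra.
Qed.

Lemma contraction_le : g * n%:R * mu <= 1 / 30.
Proof.
have gn_gt0 : 0 < g * n%:R by rewrite mulr_gt0 ?ltr0n.
have x_le : g * n%:R * mu <= g * n%:R * L by rewrite ler_pM2l.
have gnL_gt0 : 0 < g * n%:R * L by rewrite mulr_gt0 // (lt_le_trans mu_gt0).
suff : g * n%:R * L * (g * n%:R * L) <= g * n%:R * L * (1 / 30).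
  by rewrite ler_pM2l //; lra.
by have := step_sq_le; lra.
Qed.

Local Notation Q := (\sum_(j < n) sqnorm (\sum_(l < j) G l zs)).
Local Notation A2 := (\sum_(j < n) sqnorm (G j zs)).

Lemma drift_le : drift <= 16 * (g ^+ 2 * Q) + 24 * (g ^+ 2 * A2)
                          + 80 * (g ^+ 2 * n%:R ^+ 2 * L ^+ 2) * (n%:R * r2).
Proof.
set a := g ^+ 2 * L ^+ 2; set s := g ^+ 2 * n%:R ^+ 2 * L ^+ 2.
set SV := \sum_(j < n) sqnorm (z j - z0).
have drift_SV : drift <= (3 + 24 * a) * SV + 12 * (g ^+ 2 * A2) + 24 * a * (n%:R * r2).
  apply: le_trans; first by apply: ler_sum => j _; apply: sqnorm_epoch_bar_sub_le.
  rewrite !big_split /= -!mulr_sumr sum_const_ord.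
  by rewrite /a /SV; lra.
have SV_drift : SV <= 2 * (g ^+ 2 * Q) + 4 * s * (drift + n%:R * r2).
  apply: le_trans; first by apply: ler_sum => j _; apply: sqnorm_epoch_iter_sub_le; apply: ltnW.
  rewrite big_split /= -!mulr_sumr sum_const_ord.
  by rewrite /s /SV; nra.
have s_le : s <= 1 / 900 by rewrite /s; have := step_sq_le; have := contraction_le; lra.
have a_le : a <= s.
  have n2_ge1 : 1 <= n%:R ^+ 2 :> R by rewrite exprn_ege1 // ler1n.
  by rewrite /a /s; have := mulr_ge0 (sqr_ge0 g) (sqr_ge0 L); nra.
have a_ge0 : 0 <= a by rewrite mulr_ge0 ?sqr_ge0.
have SV_ge0 : 0 <= SV by apply: sumr_ge0 => j _; apply: sqnorm_ge0.
have drift_ge0 : 0 <= drift by apply: sumr_ge0 => j _; apply: sqnorm_ge0.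
have nr_ge0 : 0 <= n%:R * r2 by rewrite mulr_ge0 ?sqnorm_ge0.
have aSV : a * SV <= SV / 900 by nra.
have as_nr : a * (n%:R * r2) <= s * (n%:R * r2) by rewrite ler_wpM2r.
have s_drift : s * drift <= drift / 900 by nra.
lra.
Qed.

Lemma sqnorm_full_step_le :
  sqnorm (z0 - zs - (g * n%:R) *: Fm z0)
  <= (1 - 2 * (g * n%:R * mu) + g ^+ 2 * n%:R ^+ 2 * L ^+ 2) * r2.
Proof.
have gn_ge0 : 0 <= g * n%:R by rewrite mulr_ge0 ?ler0n // ltW.
have mono := ler_wpM2l gn_ge0 (Fm_mono z0 zs).
have lip := ler_wpM2l (sqr_ge0 (g * n%:R)) (Fm_lip z0 zs).
rewrite -[Fm z0]subr0 -Fm_zs (sqnormB (z0 - zs)) sqnormZ dotvZr (dotvC (z0 - zs)).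
move: mono lip; rewrite exprMn; lra.
Qed.

Lemma epoch_end_sub :
  z n - zs = (z0 - zs - (g * n%:R) *: Fm z0) - g *: \sum_(j < n) (G j (zb j) - G j z0).
Proof.
have sum_zb : \sum_(j < n) G j (zb j) = \sum_(j < n) (G j (zb j) - G j z0) + n%:R *: Fm z0.
  by rewrite -G_mean -big_split /=; apply: eq_bigr => j _; rewrite subrK.
rewrite -[z n](subrK z0) epoch_iter_sub sum_zb scalerDr scalerA opprD.
by rewrite (ACl (3*4*2*1))%AC.
Qed.

Lemma sqnorm_epoch_le :
  sqnorm (z n - zs) <= (1 - g * n%:R * mu / 2) * r2
                       + 2 * g ^+ 3 * L ^+ 2 * (16 * Q + 24 * A2) / mu.
Proof.
set x := g * n%:R * mu; set s := g ^+ 2 * n%:R ^+ 2 * L ^+ 2.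
set e := \sum_(j < n) (G j (zb j) - G j z0).
have e_le : sqnorm e <= n%:R * (L ^+ 2 * drift).
  by apply: le_trans (sqnorm_sum_le _) _; rewrite ler_wpM2l // mulr_sumr ler_sum.
set c := g ^+ 2 * n%:R * L ^+ 2; set W := 16 * (g ^+ 2 * Q) + 24 * (g ^+ 2 * A2).
have c_ge0 : 0 <= c := mulr_ge0 (mulr_ge0 (sqr_ge0 g) (ler0n _ n)) (sqr_ge0 L).
have Q_ge0 : 0 <= Q by apply: sumr_ge0 => j _; apply: sqnorm_ge0.
have A2_ge0 : 0 <= A2 by apply: sumr_ge0 => j _; apply: sqnorm_ge0.
have W_ge0 : 0 <= W by rewrite /W; have := sqr_ge0 g; nra.
have ge_le : g ^+ 2 * sqnorm e <= c * W + 80 * s ^+ 2 * r2.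
  have := ler_wpM2l (sqr_ge0 g) e_le; have := ler_wpM2l c_ge0 drift_le.
  have -> : g ^+ 2 * (n%:R * (L ^+ 2 * drift)) = c * drift by rewrite /c; ring.
  have -> : c * (16 * (g ^+ 2 * Q) + 24 * (g ^+ 2 * A2) + 80 * s * (n%:R * r2))
            = c * W + 80 * s ^+ 2 * r2 by rewrite /c /W /s; ring.
  lra.
have x_gt0 : 0 < x by rewrite !mulr_gt0 ?ltr0n.
have weighted := sqnormD_le_weighted (z0 - zs - (g * n%:R) *: Fm z0) (- (g *: e)) x_gt0.
rewrite -epoch_end_sub sqnormN sqnormZ in weighted.
have noiseE : x * (2 * g ^+ 3 * L ^+ 2 * (16 * Q + 24 * A2) / mu) = 2 * (c * W).
  by rewrite /x /c /W; field; rewrite gt_eqF.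
rewrite -(ler_pM2l x_gt0) mulrDr noiseE.
apply: perturbed_contraction_le weighted sqnorm_full_step_le ge_le => //.
- exact: contraction_le.
- by rewrite /s; have := mulr_ge0 (sqr_ge0 g) (sqr_ge0 L); nra.
- exact: step_sq_le.
- exact: sqnorm_ge0.
- exact: mulr_ge0.
Qed.

End Epoch.

Section Setting.
Variables (R : realType) (d n : nat).
Notation V := 'rV[R]_d.
Implicit Types (F : 'I_n -> V -> V) (L : 'I_n -> R).

Lemma Lmax_ge0 L : 0 <= Lmax L.
Proof. exact: bigmax_ge_id. Qed.

Lemma lipschitz_sqnorm_le F L i (x y : V) : lipschitz (F i) (L i) ->
  sqnorm (F i x - F i y) <= Lmax L ^+ 2 * sqnorm (x - y).
Proof.
move=> /(_ x y) lip.
have lip_max : enorm (F i x - F i y) <= Lmax L * enorm (x - y).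
  by apply: le_trans lip _; rewrite ler_wpM2r ?sqrtr_ge0 ?le_bigmax.
have := lerXn2r 2 (_ : enorm (F i x - F i y) \is Num.nneg)
                   (_ : Lmax L * enorm (x - y) \is Num.nneg) lip_max.
rewrite /enorm exprMn !sqr_sqrtr ?sqnorm_ge0 //; apply.
- by rewrite nnegrE sqrtr_ge0.
- by rewrite nnegrE mulr_ge0 ?Lmax_ge0 ?sqrtr_ge0.
Qed.

Lemma Favg_sqnorm_le F L (x y : V) : (0 < n)%N -> (forall i, lipschitz (F i) (L i)) ->
  sqnorm (Favg F x - Favg F y) <= Lmax L ^+ 2 * sqnorm (x - y).
Proof.
move=> n_gt0 F_lip; have n_gt0' : 0 < n%:R :> R by rewrite ltr0n.
rewrite /Favg -scalerBr -sumrB sqnormZ.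
apply: le_trans (ler_wpM2l (sqr_ge0 _) (sqnorm_sum_le _)) _.
have terms_le : \sum_i sqnorm (F i x - F i y) <= n%:R * (Lmax L ^+ 2 * sqnorm (x - y)).
  by rewrite -sum_const_ord; apply: ler_sum => i _; apply: lipschitz_sqnorm_le.
apply: le_trans (ler_wpM2l (sqr_ge0 _) (ler_wpM2l (ler0n _ n) terms_le)) _.
by rewrite le_eqVlt; apply/predU1P; left; field; rewrite gt_eqF.
Qed.

Lemma mu_le_Lmax F L mu zs : seg_setting F L mu zs -> (0 < d)%N -> 0 < Lmax L -> mu <= Lmax L.
Proof.
case=> n_gt0 _ F_mono F_lip _ d_gt0 Lmax_gt0; set b : V := const_mx 1.
have b_gt0 : 0 < sqnorm b.
  rewrite /sqnorm /dotv (eq_bigr (fun=> 1)) => [|j _]; last by rewrite mxE mulr1.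
  by rewrite sum_const_ord mulr1 ltr0n.
have := F_mono b 0; have := Favg_sqnorm_le b 0 n_gt0 F_lip.
have := dotv_le_sqnorm (Favg F b - Favg F 0) (Lmax L *: b).
rewrite sqnormZ dotvZr !subr0 => cauchy mono lip.
have : Lmax L * (mu * sqnorm b) <= Lmax L * (Lmax L * sqnorm b) by nra.
by rewrite ler_pM2l // ler_pM2r.
Qed.

Lemma segso_iter_step0 (F : 'I_n -> V -> V) (p : 'S_n) (z0 : V) k :
  segso_iter F 0 (2 * 0) p z0 k = z0.
Proof.
elim: k => [//|k IH]; rewrite /segso_iter iterS -/(segso_iter _ _ _ _ _ _) IH /seg_epoch.
by elim: (enum 'I_n) => [//|i s IHs] /=; rewrite /seg_step !scale0r !subr0.
Qed.

Lemma sigma2_ge0 (F : 'I_n -> V -> V) (zs : V) : 0 <= sigma2 F zs.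
Proof. by rewrite mulr_ge0 ?invr_ge0 ?ler0n // sumr_ge0 // => i _; apply: sqnorm_ge0. Qed.

End Setting.

Lemma linear_recursion_le (R : realFieldType) (rho N : R) (u : nat -> R) :
  0 <= rho < 1 -> 0 <= N -> (forall k, u k.+1 <= rho * u k + N) ->
  forall k, u k <= rho ^+ k * u 0 + N / (1 - rho).
Proof.
case/andP=> rho_ge0 rho_lt1 N_ge0 u_le; have rho1 : 0 < 1 - rho by rewrite subr_gt0.
elim=> [|k IH]; first by rewrite expr0 mul1r lerDl divr_ge0 // ltW.
have fixpointE : rho * (N / (1 - rho)) + N = N / (1 - rho) by field; rewrite gt_eqF.
have := ler_wpM2l rho_ge0 IH; have := u_le k; rewrite exprS -mulrA; lra.
Qed.

Section ShuffledEpoch.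
Variables (R : realType) (d n' : nat).
Local Notation n := n'.+1.
Notation V := 'rV[R]_d.
Variables (F : 'I_n -> V -> V) (g : R).

Definition shuffled (p : 'S_n) (j : nat) : V -> V := F (p (inord j)).

Lemma seg_epochE p z : seg_epoch F g (2 * g) p z = epoch_iter (shuffled p) g z n.
Proof.
have enumE : enum 'I_n = map inord (iota 0 n).
  by rewrite -val_enum_ord -map_comp (eq_map (@inord_val n')) map_id.
have iterE m : foldl (fun z i => seg_step F g (2 * g) (p i) z) z (map (@inord n') (iota 0 m))
               = epoch_iter (shuffled p) g z m.
  by elim: m => [//|m IH]; rewrite -[m.+1]addn1 iotaD map_cat foldl_cat IH add0n addn1.
by rewrite /seg_epoch enumE iterE.
Qed.

Lemma sum_shuffled p z : \sum_(j < n) shuffled p j z = n%:R *: Favg F z.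
Proof.
rewrite /Favg scalerA mulfV ?pnatr_eq0 // scale1r.
by rewrite -(sum_perm_comp p (F^~ z)); apply: eq_bigr => j _; rewrite /shuffled inord_val.
Qed.

Lemma sum_sqnorm_shuffled p z : \sum_(j < n) sqnorm (shuffled p j z) = \sum_i sqnorm (F i z).
Proof.
rewrite -(sum_perm_comp p (fun i => sqnorm (F i z))).
by apply: eq_bigr => j _; rewrite /shuffled inord_val.
Qed.

Lemma Eperm_shuffled_prefix_le zs : \sum_i F i zs = 0 ->
  Eperm (fun p => \sum_(j < n) sqnorm (\sum_(l < j) shuffled p l zs))
  <= n%:R * \sum_i sqnorm (F i zs).
Proof.
move=> F_zs; rewrite Eperm_sum -sum_const_ord; apply: ler_sum => j _.
have inord_inj : injective (fun l : 'I_j => inord l : 'I_n).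
  move=> l l' /(congr1 val); rewrite /= !inordK; [exact: val_inj | |];
    exact: leq_trans (ltn_ord _) (ltnW (ltn_ord j)).
apply: le_trans (@Eperm_sqnorm_sum_inj _ _ _ (fun i => F i zs) _ _ F_zs inord_inj) _.
have S_ge0 : 0 <= \sum_i sqnorm (F i zs) by apply: sumr_ge0 => i _; apply: sqnorm_ge0.
by rewrite card_ord mulrA ler_piMl // ler_pdivrMr ?ltr0n // mul1r ler_nat ltnW.
Qed.

End ShuffledEpoch.

Section ShuffleOnceBound.
Variables (R : realType) (d n' : nat).
Local Notation n := n'.+1.
Notation V := 'rV[R]_d.
Variables (F : 'I_n -> V -> V) (L : 'I_n -> R) (mu g : R) (z0 zs : V).
Hypothesis setting : seg_setting F L mu zs.
Hypotheses (g_gt0 : 0 < g) (mu_le_L : mu <= Lmax L).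
Hypothesis step_small : 30 * g * n%:R * Lmax L ^+ 2 <= mu.

Local Notation prefix_noise p := (\sum_(j < n) sqnorm (\sum_(l < j) shuffled F p l zs)).
Local Notation A2 := (\sum_i sqnorm (F i zs)).

Lemma segso_iter_perm_le p k :
  sqnorm (segso_iter F g (2 * g) p z0 k - zs)
  <= (1 - g * n%:R * mu / 2) ^+ k * sqnorm (z0 - zs)
     + 4 * g ^+ 2 * Lmax L ^+ 2 * (16 * prefix_noise p + 24 * A2) / (n%:R * mu ^+ 2).
Proof.
have [_ mu_gt0 F_mono F_lip F_zs] := setting.
have x_le := contraction_le (ltn0Sn n') g_gt0 mu_gt0 mu_le_L step_small.
have x_gt0 : 0 < g * n%:R * mu by rewrite !mulr_gt0.
set N := 2 * g ^+ 3 * Lmax L ^+ 2 * (16 * prefix_noise p + 24 * A2) / mu.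
have noise_ge0 : 0 <= 16 * prefix_noise p + 24 * A2.
  by rewrite addr_ge0 // mulr_ge0 // sumr_ge0 // => *; apply: sqnorm_ge0.
have N_ge0 : 0 <= N.
  apply: divr_ge0 (ltW mu_gt0); apply: mulr_ge0 noise_ge0.
  by rewrite mulr_ge0 ?sqr_ge0 // mulr_ge0 // exprn_ge0 // ltW.
have noiseE : 4 * g ^+ 2 * Lmax L ^+ 2 * (16 * prefix_noise p + 24 * A2) / (n%:R * mu ^+ 2)
              = N / (1 - (1 - g * n%:R * mu / 2)).
  have n_gt0 : 0 < 1 + n'%:R :> R by rewrite addrC natr1 ltr0n.
  have x'_gt0 : 0 < g * (1 + n'%:R) * mu by rewrite !mulr_gt0.
  by rewrite /N; field; apply/and3P; split; apply/eqP => E; lra.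
rewrite noiseE.
apply: (linear_recursion_le (u := fun k => sqnorm (segso_iter F g (2 * g) p z0 k - zs))) => [|//|i].
  by apply/andP; split; lra.
rewrite /segso_iter iterS seg_epochE.
have := sqnorm_epoch_le (segso_iter F g (2 * g) p z0 i) (ltn0Sn n') g_gt0 mu_gt0 mu_le_L
  step_small (fun j x y => lipschitz_sqnorm_le x y (F_lip (p (inord j)))) (sum_shuffled F p) F_mono
  (fun a b => Favg_sqnorm_le a b (ltn0Sn n') F_lip) F_zs.
by rewrite sum_sqnorm_shuffled.
Qed.

Lemma Eperm_segso_le k :
  Eperm (fun p => sqnorm (segso_iter F g (2 * g) p z0 k - zs))
  <= (1 - g * n%:R * mu / 2) ^+ k * sqnorm (z0 - zs)
     + (64 * n%:R + 96) * g ^+ 2 * Lmax L ^+ 2 * sigma2 F zs / mu ^+ 2.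
Proof.
have [_ mu_gt0 _ _ F_zs] := setting.
have sum_F_zs : \sum_i F i zs = 0.
  by move/eqP: F_zs; rewrite scaler_eq0 invr_eq0 pnatr_eq0 /= => /eqP.
set c1 := 64 * g ^+ 2 * Lmax L ^+ 2 / (n%:R * mu ^+ 2).
set c2 := 96 * g ^+ 2 * Lmax L ^+ 2 * A2 / (n%:R * mu ^+ 2).
have perm_le p : sqnorm (segso_iter F g (2 * g) p z0 k - zs)
                 <= (1 - g * n%:R * mu / 2) ^+ k * sqnorm (z0 - zs) + c2 + c1 * prefix_noise p.
  rewrite -addrA (_ : c2 + _ = 4 * g ^+ 2 * Lmax L ^+ 2 * (16 * prefix_noise p + 24 * A2)
                                / (n%:R * mu ^+ 2)); first exact: segso_iter_perm_le.
  by rewrite /c1 /c2; field; rewrite gt_eqF //= addrC natr1 pnatr_eq0.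
apply: le_trans (Eperm_le perm_le) _; rewrite EpermD EpermZ !Eperm_const -addrA lerD2l.
have c1_ge0 : 0 <= c1.
  apply: divr_ge0 (mulr_ge0 (ler0n _ _) (sqr_ge0 _)).
  by rewrite mulr_ge0 ?sqr_ge0 // mulr_ge0 ?sqr_ge0.
have := ler_wpM2l c1_ge0 (Eperm_shuffled_prefix_le sum_F_zs).
have -> : (64 * n%:R + 96) * g ^+ 2 * Lmax L ^+ 2 * sigma2 F zs / mu ^+ 2
          = c2 + c1 * (n%:R * A2).
  by rewrite /c1 /c2 /sigma2; field; rewrite gt_eqF //= addrC natr1 pnatr_eq0.
by rewrite lerD2l.
Qed.

End ShuffleOnceBound.

Section StepSize.
Variables (R : realType) (n : nat).

Definition step_max (mu Lm : R) : R :=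
  mu / (10 * Lm ^+ 2 * Num.sqrt (10 * n%:R ^+ 2 + 2 * n%:R + 54)).

Lemma step_max_small (mu Lm g : R) : 0 <= mu -> 0 < Lm -> 0 <= g -> g <= step_max mu Lm ->
  30 * g * n%:R * Lm ^+ 2 <= mu.
Proof.
rewrite /step_max => mu_ge0 Lm_gt0 g_ge0; set S := Num.sqrt _.
have S_ge : 3 * n%:R <= S.
  rewrite -[3 * n%:R]ger0_norm ?mulr_ge0 ?ler0n // -sqrtr_sqr ler_wsqrtr //.
  by have := ler0n R n; nra.
have S_gt0 : 0 < S by rewrite /S sqrtr_gt0; have := ler0n R n; nra.
rewrite ler_pdivlMr ?mulr_gt0 ?exprn_gt0 // => g_le.
have gL_ge0 : 0 <= 10 * g * Lm ^+ 2 by rewrite mulr_ge0 ?sqr_ge0 // mulr_ge0.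
by have := ler_wpM2l gL_ge0 S_ge; lra.
Qed.

End StepSize.

(* Stated for every [rho >= 1 - g n mu / 2]: when [d = 0] nothing constrains [mu], and
   [1 - g n mu / 2] may be negative. *)
Lemma segso_mean_sq_le (R : realType) (n d : nat) (F : 'I_n -> 'rV[R]_d -> 'rV[R]_d)
    (L : 'I_n -> R) (mu : R) (z0 zs : 'rV[R]_d) (g rho : R) k :
  seg_setting F L mu zs -> 0 <= g -> g <= step_max n mu (Lmax L) ->
  1 - g * n%:R * mu / 2 <= rho ->
  Eperm (fun p => sqnorm (segso_iter F g (2 * g) p z0 k - zs))
  <= rho ^+ k * sqnorm (z0 - zs)
     + (64 * n%:R + 96) * g ^+ 2 * Lmax L ^+ 2 * sigma2 F zs / mu ^+ 2.
Proof.
move=> setting g_ge0 g_le rho_ge; have [n_gt0 mu_gt0 _ _ _] := setting.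
have noise_ge0 : 0 <= (64 * n%:R + 96) * g ^+ 2 * Lmax L ^+ 2 * sigma2 F zs / mu ^+ 2.
  apply: divr_ge0 (sqr_ge0 _); apply: mulr_ge0 (sigma2_ge0 _ _).
  by apply: mulr_ge0 (sqr_ge0 _); apply: mulr_ge0 (sqr_ge0 _); rewrite addr_ge0 ?mulr_ge0.
have [d0|d_gt0] := posnP d.
  rewrite (eq_Eperm (fun p => sqnorm_dim0 _ d0)) Eperm_const sqnorm_dim0 // mulr0 add0r.
  exact: noise_ge0.
have [g0|g_neq0] := eqVneq g 0.
  rewrite g0 in rho_ge *; rewrite (eq_Eperm (fun p => congr1 (fun z => sqnorm (z - zs))
                                   (segso_iter_step0 F p z0 k))) Eperm_const.
  rewrite expr0n /= mulr0 !mul0r addr0 ler_peMl ?sqnorm_ge0 // exprn_ege1 //; lra.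
have g_gt0 : 0 < g by rewrite lt_neqAle eq_sym g_neq0.
have Lm_gt0 : 0 < Lmax L.
  rewrite lt_neqAle Lmax_ge0 andbT; apply: contraTneq g_le => <-.
  by rewrite /step_max expr0n /= mulr0 mul0r invr0 mulr0 -ltNge.
have step_small := step_max_small (ltW mu_gt0) Lm_gt0 g_ge0 g_le.
have mu_le := mu_le_Lmax setting d_gt0 Lm_gt0.
have x_le := contraction_le n_gt0 g_gt0 mu_gt0 mu_le step_small.
case: n => [//|n'] in F L setting g_le rho_ge n_gt0 step_small x_le noise_ge0 mu_le Lm_gt0 *.
apply: le_trans (Eperm_segso_le z0 setting g_gt0 mu_le step_small k) _.
by rewrite lerD2r ler_wpM2r ?sqnorm_ge0 // lerXn2r // nnegrE; lra.
Qed.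

Lemma segso_fixed_step_le (R : realType) (n d : nat) (F : 'I_n -> 'rV[R]_d -> 'rV[R]_d)
    (L : 'I_n -> R) (mu : R) (z0 zs : 'rV[R]_d) (g : R) k :
  seg_setting F L mu zs -> 0 < g -> g <= step_max n mu (Lmax L) ->
  Eperm (fun p => sqnorm (segso_iter F g (2 * g) p z0 k - zs))
  <= (1 - g * n%:R * mu / 4) ^+ k * sqnorm (z0 - zs)
     + 96 * Lmax L ^+ 2 / mu ^+ 2 * ((25 + n%:R) * g ^+ 2 + (2 * g) ^+ 2) * sigma2 F zs.
Proof.
move=> setting g_gt0 g_le; have [_ mu_gt0 _ _ _] := setting.
have x_ge0 : 0 <= g * n%:R * mu by rewrite !mulr_ge0 // ltW.
have rho_ge : 1 - g * n%:R * mu / 2 <= 1 - g * n%:R * mu / 4 by lra.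
apply: le_trans (segso_mean_sq_le z0 k setting (ltW g_gt0) g_le rho_ge) _.
rewrite lerD2l; set M := g ^+ 2 * Lmax L ^+ 2 * sigma2 F zs / mu ^+ 2.
have M_ge0 : 0 <= M.
  by apply: divr_ge0 (sqr_ge0 _); rewrite mulr_ge0 ?sigma2_ge0 // mulr_ge0 ?sqr_ge0.
have -> : (64 * n%:R + 96) * g ^+ 2 * Lmax L ^+ 2 * sigma2 F zs / mu ^+ 2 = (64 * n%:R + 96) * M.
  by rewrite /M; field; rewrite gt_eqF.
have -> : 96 * Lmax L ^+ 2 / mu ^+ 2 * ((25 + n%:R) * g ^+ 2 + (2 * g) ^+ 2) * sigma2 F zs
          = 96 * (29 + n%:R) * M.
  by rewrite /M; field; rewrite gt_eqF.
by rewrite ler_wpM2r //; have := ler0n R n; lra.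
Qed.

Section TunedStep.
Variables (R : realType) (n K : nat) (mu Lm : R).
Hypotheses (n_gt0 : (0 < n)%N) (K_gt0 : (0 < K)%N) (mu_gt0 : 0 < mu).

Local Notation y := (Num.sqrt (n%:R : R) * K%:R).
Local Notation B := (4 * ln y / (mu * n%:R * K%:R)).
Local Notation g := (Num.min (step_max n mu Lm) B).

Lemma sqrt_n_K_ge1 : 1 <= y.
Proof.
have n_ge1 : 1 <= n%:R :> R by rewrite ler1n.
have K_ge1 : 1 <= K%:R :> R by rewrite ler1n.
have : 1 <= Num.sqrt n%:R :> R by have := ler_wsqrtr n_ge1; rewrite sqrtr1.
by nra.
Qed.

Lemma ln_y_ge0 : 0 <= ln y.
Proof. exact: ln_ge0 sqrt_n_K_ge1. Qed.

Lemma step_max_ge0 : 0 <= step_max n mu Lm.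
Proof. by apply: divr_ge0 (ltW mu_gt0) _; rewrite mulr_ge0 ?sqrtr_ge0 // mulr_ge0 ?sqr_ge0. Qed.

Lemma tuned_step_ge0 : 0 <= g.
Proof.
by rewrite le_min step_max_ge0 divr_ge0 ?mulr_ge0 ?ln_y_ge0 ?ltW ?mulr_gt0 ?ltr0n.
Qed.

Lemma tuned_contraction_le :
  expR (- (g * n%:R * mu / 2)) ^+ K
  <= expR (- (1 / 180 * mu ^+ 2 * K%:R / Lm ^+ 2)) + (n%:R * K%:R ^+ 2)^-1.
Proof.
have n_gt0' : 0 < n%:R :> R by rewrite ltr0n.
have K_gt0' : 0 < K%:R :> R by rewrite ltr0n.
rewrite -expRM_natl; have [AB|BA] := leP (step_max n mu Lm) B.
  apply: (@le_trans _ _ (expR (- (1 / 180 * mu ^+ 2 * K%:R / Lm ^+ 2)))); last first.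
    by rewrite lerDl invr_ge0 mulr_ge0 ?exprn_ge0 ?ler0n.
  rewrite ler_expR /step_max; set S := (X in 10 * _ * X).
  have [Lm0|Lm_neq0] := eqVneq Lm 0.
    by rewrite Lm0 expr0n /= !(mulr0, mul0r, invr0, oppr0).
  have n_ge1 : 1 <= n%:R :> R by rewrite ler1n.
  have S_gt0 : 0 < S by rewrite /S sqrtr_gt0; nra.
  have S_le : S <= 9 * n%:R.
    by rewrite -[9 * n%:R]ger0_norm ?mulr_ge0 ?ler0n // -sqrtr_sqr ler_wsqrtr //; nra.
  have -> : 1 / 180 * mu ^+ 2 * K%:R / Lm ^+ 2
            = 1 / 18 * (mu * K%:R * (mu / (10 * Lm ^+ 2 * S))) * S.
    by field; rewrite Lm_neq0 gt_eqF.
  set A := mu / (10 * Lm ^+ 2 * S).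
  have A_ge0 : 0 <= A.
    by apply: divr_ge0 (ltW mu_gt0) (mulr_ge0 (mulr_ge0 (ler0n _ _) (sqr_ge0 _)) (ltW S_gt0)).
  have := ler_wpM2l (mulr_ge0 (mulr_ge0 (ltW mu_gt0) (ltW K_gt0')) A_ge0) S_le.
  lra.
apply: (@le_trans _ _ ((n%:R * K%:R ^+ 2)^-1)); last by rewrite lerDr ltW ?expR_gt0.
have -> : K%:R * - (B * n%:R * mu / 2) = - (2%:R * ln y).
  by field; rewrite !gt_eqF.
rewrite expRN expRM_natl lnK ?posrE ?(lt_le_trans ltr01 sqrt_n_K_ge1) //.
by rewrite exprMn sqr_sqrtr ?ler0n.
Qed.

Lemma tuned_noise_le (s : R) : 0 <= s ->
  (64 * n%:R + 96) * g ^+ 2 * Lm ^+ 2 * s / mu ^+ 2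
  <= 2560 * Lm ^+ 2 * s / mu ^+ 4 * ln y ^+ 2 * (n%:R * K%:R ^+ 2)^-1.
Proof.
move=> s_ge0; have n_ge1 : 1 <= n%:R :> R by rewrite ler1n.
have K_gt0' : 0 < K%:R :> R by rewrite ltr0n.
set M := Lm ^+ 2 * s / mu ^+ 2.
have M_ge0 : 0 <= M by apply: divr_ge0 (sqr_ge0 _); apply: mulr_ge0 (sqr_ge0 _) s_ge0.
have g_le_B : g <= B by rewrite ge_min lexx orbT.
have g2_le : g ^+ 2 <= B ^+ 2.
  by rewrite lerXn2r ?nnegrE ?tuned_step_ge0 // (le_trans tuned_step_ge0 g_le_B).
have coef_le : (64 * n%:R + 96) * g ^+ 2 <= 160 * n%:R * B ^+ 2.
  by apply: ler_pM; rewrite ?sqr_ge0 //; lra.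
have -> : (64 * n%:R + 96) * g ^+ 2 * Lm ^+ 2 * s / mu ^+ 2 = (64 * n%:R + 96) * g ^+ 2 * M.
  by rewrite /M; field; rewrite gt_eqF.
have -> : 2560 * Lm ^+ 2 * s / mu ^+ 4 * ln y ^+ 2 * (n%:R * K%:R ^+ 2)^-1
          = 160 * n%:R * B ^+ 2 * M.
  by rewrite /M; field; rewrite !gt_eqF // (lt_le_trans ltr01).
by rewrite ler_wpM2r.
Qed.

End TunedStep.

Lemma segso_tuned_step_le (R : realType) (n d : nat) (F : 'I_n -> 'rV[R]_d -> 'rV[R]_d)
    (L : 'I_n -> R) (mu : R) (z0 zs : 'rV[R]_d) (K : nat) :
  seg_setting F L mu zs -> (0 < K)%N ->
  let g := Num.min (step_max n mu (Lmax L))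
                   (4 * ln (Num.sqrt n%:R * K%:R) / (mu * n%:R * K%:R)) in
  Eperm (fun p => sqnorm (segso_iter F g (2 * g) p z0 K - zs))
  <= (sqnorm (z0 - zs) + 2560 * Lmax L ^+ 2 * sigma2 F zs / mu ^+ 4)
     * (1 + ln (Num.sqrt n%:R * K%:R)) ^+ 2
     * (expR (- (1 / 180 * mu ^+ 2 * K%:R / Lmax L ^+ 2)) + (n%:R * K%:R ^+ 2)^-1).
Proof.
move=> setting K_gt0; cbv zeta; set g := Num.min _ _; have [n_gt0 mu_gt0 _ _ _] := setting.
have g_ge0 : 0 <= g := tuned_step_ge0 (Lmax L) n_gt0 K_gt0 mu_gt0.
have rho_ge : 1 - g * n%:R * mu / 2 <= expR (- (g * n%:R * mu / 2)).
  by have := expR_ge1Dx (- (g * n%:R * mu / 2)); lra.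
have g_le : g <= step_max n mu (Lmax L) by rewrite ge_min lexx.
apply: le_trans (segso_mean_sq_le z0 K setting g_ge0 g_le rho_ge) _.
have contr := tuned_contraction_le (Lmax L) n_gt0 K_gt0 mu_gt0.
have noise := tuned_noise_le (Lmax L) n_gt0 K_gt0 mu_gt0 (sigma2_ge0 F zs); rewrite -/g in noise.
have l_ge0 := ln_y_ge0 R n_gt0 K_gt0.
move: contr noise l_ge0; set l := ln _; set Z := 2560 * _ * _ / _.
set E := expR (- (1 / 180 * _ * _ / _)); set I := (_ * _)^-1; set rhoK := expR _ ^+ K.
set r0 := sqnorm _ => contr noise l_ge0.
have r0_ge0 : 0 <= r0 := sqnorm_ge0 _.
have Z_ge0 : 0 <= Z.
  by apply: divr_ge0 (exprn_ge0 _ (ltW mu_gt0)); rewrite mulr_ge0 ?sigma2_ge0 // mulr_ge0 ?sqr_ge0.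
have I_ge0 : 0 <= I by rewrite invr_ge0 mulr_ge0 ?sqr_ge0.
have EI_ge0 : 0 <= E + I := addr_ge0 (ltW (expR_gt0 _)) I_ge0.
have Q_ge1 : 1 <= (1 + l) ^+ 2 by nra.
have l2_le : l ^+ 2 <= (1 + l) ^+ 2 by nra.
have I_le : I <= E + I by rewrite lerDr ltW ?expR_gt0.
have := ler_wpM2r r0_ge0 contr; have := ler_peMl (mulr_ge0 EI_ge0 r0_ge0) Q_ge1.
have := ler_wpM2l Z_ge0 (ler_pM (sqr_ge0 l) I_ge0 l2_le I_le).
lra.
Qed.

Theorem corollary1 (R : realType) :
  (* Part 1 *)
  (forall (n d : nat) (F : 'I_n -> 'rV[R]_d -> 'rV[R]_d) (L : 'I_n -> R)
          (mu : R) (z0 zs : 'rV[R]_d) (g1 g2 : R),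
     seg_setting F L mu zs ->
     0 < g1 -> g2 = 2 * g1 ->
     g1 <= mu / (10 * Lmax L ^+ 2 * Num.sqrt (10 * n%:R ^+ 2 + 2 * n%:R + 54)) ->
     forall k : nat,
       Eperm (fun pi => sqnorm (segso_iter F g1 g2 pi z0 k - zs))
       <= (1 - g1 * n%:R * mu / 4) ^+ k * sqnorm (z0 - zs)
          + 96 * Lmax L ^+ 2 / mu ^+ 2
            * ((25 + n%:R) * g1 ^+ 2 + g2 ^+ 2) * sigma2 F zs)
  /\
  (* Part 2: O~ read as: absolute c > 0 and log power p, constant depending
     only on (mu, L_max, ||z0 - z*||^2, sigma_*^2) *)
  (exists (c : R) (p : nat) (C : R -> R -> R -> R -> R),
     0 < c /\
     forall (n d : nat) (F : 'I_n -> 'rV[R]_d -> 'rV[R]_d) (L : 'I_n -> R)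
            (mu : R) (z0 zs : 'rV[R]_d) (K : nat),
       seg_setting F L mu zs -> (0 < K)%N ->
       let g1 := Num.min
                   (mu / (10 * Lmax L ^+ 2
                          * Num.sqrt (10 * n%:R ^+ 2 + 2 * n%:R + 54)))
                   (4 * ln (Num.sqrt n%:R * K%:R) / (mu * n%:R * K%:R)) in
       let g2 := 2 * g1 in
       Eperm (fun pi => sqnorm (segso_iter F g1 g2 pi z0 K - zs))
       <= C mu (Lmax L) (sqnorm (z0 - zs)) (sigma2 F zs)
          * (1 + ln (Num.sqrt n%:R * K%:R)) ^+ p
          * (expR (- (c * mu ^+ 2 * K%:R / Lmax L ^+ 2))
             + (n%:R * K%:R ^+ 2)^-1)).
Proof.
split.
  move=> n d F L mu z0 zs g1 g2 setting g1_gt0 -> g1_le k.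
  exact: segso_fixed_step_le.
exists (1 / 180), 2%N, (fun mu Lm r s => r + 2560 * Lm ^+ 2 * s / mu ^+ 4).
split; first by rewrite divr_gt0.
move=> n d F L mu z0 zs K setting K_gt0.
exact: segso_tuned_step_le.
Qed.
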